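(* Let $p$ be an odd prime. Then, modulo $p$, \[ (p-1)!!\equiv \operatorname{sf}(p-1)\equiv (-1)^{\frac{p-1}{2}}\, H(p-1) \pmod p. \]
   Context: For a natural number $n$, the double factorial $n!!$ is the product of the natural numbers less than or equal to $n$ that have the same parity as $n$. The superfactorial is $\operatorname{sf}(n)=\prod_{k=1}^{n} k!$. The hyperfactorial is $H(n)=\prod_{k=1}^{n} k^k$. *)

From mathcomp Require Import all_boot all_order all_algebra.
Set Implicit Arguments. Unset Strict Implicit. Unset Printing Implicit Defensive.

Fixpoint dfact (n : nat) : nat :=
  match n with
  | 0 => 1
  | 1 => 1
  | (m.+2) as k => k * dfact m
  end.

Definition superfact (n : nat) : nat := \prod_(1 <= k < n.+1) k`!.

Definition hyperfact (n : nat) : nat := \prod_(1 <= k < n.+1) k ^ k.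

From mathcomp Require Import all_boot all_algebra zify.
Import GRing.Theory.

Set Implicit Arguments.
Unset Strict Implicit.
Unset Printing Implicit Defensive.

(* Write p = 2m + 1.  Each of the three products runs over 1, ..., 2m and is
   regrouped into the m pairs (k, p - k), 1 <= k <= m; modulo p we have
   p - k = -k and k^p = k, so each pair collapses to a signed k.  The double
   factorial contributes the even member of the pair, sf(p - 1) contributes
   k^(p-k) (p-k)^k and H(p - 1) contributes k^k (p-k)^(p-k); the first two
   both reduce to (-1)^k k, the third to -(-1)^k k. *)

Lemma dfact_double m :
  dfact m.*2 = \prod_(0 <= k < m.*2) (if odd k then k.+1 else 1).
Proof.
elim: m => [|m IHm]; first by rewrite big_geq.
rewrite doubleS !big_nat_recr //= -IHm odd_double /= -doubleS.
by rewrite muln1 mulnC.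
Qed.

Lemma superfact_prod_pow n : superfact n = \prod_(0 <= k < n) k.+1 ^ (n - k).
Proof.
elim: n => [|n IHn]; first by rewrite /superfact !big_geq.
rewrite /superfact big_nat_recr //= -/(superfact n) IHn fact_prod big_add1.
rewrite [RHS](eq_big_nat _ _ (F2 := fun k => k.+1 ^ (n - k) * k.+1)); last first.
  by move=> k /andP[_ ltkn]; rewrite subSn // expnSr.
by rewrite big_split /= [in RHS]big_nat_recr //= subnn muln1.
Qed.

Lemma hyperfact_prod_pow n : hyperfact n = \prod_(0 <= k < n) k.+1 ^ k.+1.
Proof. by rewrite /hyperfact big_add1. Qed.

Section PairedProduct.

Variables (R : Type) (idx : R) (op : Monoid.com_law idx).

Lemma big_nat_double_pair m (F : nat -> R) :
  \big[op/idx]_(0 <= k < m.*2) F k =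
  \big[op/idx]_(0 <= i < m) op (F i) (F (m.*2.-1 - i)%N).
Proof.
elim: m F => [|m IHm] F; first by rewrite !big_geq.
rewrite doubleS big_nat_recl // big_nat_recr //= (IHm (fun k => F k.+1)).
rewrite [RHS]big_nat_recl // subn0 /= -!Monoid.mulmA; congr (op _ _).
rewrite Monoid.mulmC; congr (op _ _).
by apply: eq_big_nat => i /andP[_ ltim]; congr (op _ (F _)); lia.
Qed.

End PairedProduct.

Local Open Scope ring_scope.

Section OddPrimeCharacteristic.

Variables (R : comNzRingType) (p m : nat).
Hypotheses (chRp : p \in [pchar R]) (p_eq : p = m.*2.+1).

Lemma natr_Fermat n : n%:R ^+ p = n%:R :> R.
Proof. by rewrite -(pFrobenius_autE chRp) pFrobenius_aut_nat. Qed.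

Lemma natr_compl i j : (i + j)%N = p -> j%:R = - i%:R :> R.
Proof.
by move=> sum_ij; apply/eqP; rewrite -addr_eq0 -natrD addnC sum_ij pcharf0.
Qed.

Lemma natr_compl_pow i j a b : (i + j)%N = p -> (a + b)%N = p ->
  i%:R ^+ a * j%:R ^+ b = (-1) ^+ b * i%:R :> R.
Proof.
move=> sum_ij sum_ab; rewrite (natr_compl sum_ij) (exprNn i%:R) mulrCA -exprD.
by rewrite sum_ab natr_Fermat.
Qed.

Definition signed_factor (k : nat) : R := (-1) ^+ k.+1 * k.+1%:R.

Lemma dfact_modp : (dfact m.*2)%:R = \prod_(0 <= k < m) signed_factor k :> R.
Proof.
rewrite dfact_double natr_prod big_nat_double_pair /=.
apply: eq_big_nat => k /andP[_ ltkm]; rewrite /signed_factor.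
have odd_compl : odd (m.*2.-1 - k) = ~~ odd k.
  have -> : m.*2.-1 = (m.-1).*2.+1 by lia.
  by rewrite oddB /= ?odd_double //; lia.
rewrite odd_compl; case: ifP => odd_k /=.
  by rewrite -signr_odd /= odd_k mulr1 mul1r.
have -> : (m.*2.-1 - k).+1 = (m.*2 - k)%N by lia.
have sum_p : (k.+1 + (m.*2 - k))%N = p by lia.
by rewrite (natr_compl sum_p) mul1r exprS -signr_odd odd_k expr0 mulr1 mulN1r.
Qed.

Lemma superfact_modp :
  (superfact m.*2)%:R = \prod_(0 <= k < m) signed_factor k :> R.
Proof.
rewrite superfact_prod_pow natr_prod big_nat_double_pair.
apply: eq_big_nat => k /andP[_ ltkm] /=; rewrite !natrX.
have -> : (m.*2 - (m.*2.-1 - k))%N = k.+1 by lia.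
have -> : (m.*2.-1 - k).+1 = (m.*2 - k)%N by lia.
by apply: natr_compl_pow; lia.
Qed.

Lemma hyperfact_modp :
  (hyperfact m.*2)%:R = \prod_(0 <= k < m) - signed_factor k :> R.
Proof.
rewrite hyperfact_prod_pow natr_prod big_nat_double_pair.
apply: eq_big_nat => k /andP[_ ltkm] /=; rewrite !natrX.
have -> : (m.*2.-1 - k).+1 = (m.*2 - k)%N by lia.
rewrite natr_compl_pow; try lia.
rewrite /signed_factor -mulNr -[(-1) ^+ k.+1]signr_odd /= signrN opprK.
rewrite -[(-1) ^+ (m.*2 - k)]signr_odd.
by rewrite oddB ?odd_double //; lia.
Qed.

Lemma superfact_hyperfact_modp :
  (superfact m.*2)%:R = (-1) ^+ m * (hyperfact m.*2)%:R :> R.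
Proof.
rewrite superfact_modp hyperfact_modp.
under [in RHS]eq_bigr do rewrite -mulN1r.
rewrite [in RHS]big_split /= prodr_const_nat subn0 mulrA -exprD addnn.
by rewrite -signr_odd odd_double mul1r.
Qed.

End OddPrimeCharacteristic.

Lemma eqz_mod_pchar (R : nzRingType) p (x y : int) : p \in [pchar R] ->
  x%:~R = y%:~R :> R -> (x = y %[mod p%:Z])%Z.
Proof.
move=> chRp eq_xy; apply/eqP; rewrite eqz_mod_dvd (dvdz_pcharf chRp).
by rewrite rmorphB /= eq_xy subrr.
Qed.

Theorem theorem2 (p : nat) (hp : prime p) (hodd : odd p) :
  ((dfact p.-1)%:Z = (superfact p.-1)%:Z %[mod p%:Z])%Z /\
  ((superfact p.-1)%:Z = (-1) ^+ (p.-1)./2 * (hyperfact p.-1)%:Z %[mod p%:Z])%Z.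
Proof.
set m := p./2; have p_eq : p = m.*2.+1 by rewrite -[LHS]odd_double_half hodd.
have chFp := pchar_Fp hp.
have -> : p.-1 = m.*2 by rewrite p_eq.
rewrite doubleK.
split; apply: (eqz_mod_pchar chFp); rewrite ?rmorphM ?rmorphXn /= ?rmorphN1 -!pmulrn.
  by rewrite (dfact_modp chFp p_eq) (superfact_modp chFp p_eq).
exact: superfact_hyperfact_modp chFp p_eq.
Qed.
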